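(* Let $\mathbb{F}$ be a finite field or $\mathbb{R}$, $\Delta>1$ and $D\le n$. For an $m\times n$ matrix $M$ over $\mathbb{F}$ which can $\Delta$-approximate the sparsity $d=\|\mathbf{x}\|_0$ of any $\mathbf{x}\in\mathbb{F}^n$ with sparsity at most $D$ from $M\mathbf{x}$, it is necessary that $$\mathrm{rank}\,M\ \ge\ n-\max_{V\ (\Delta,D)\text{-distinguishing}}\dim(V).$$
   Context: $M\mathbf{x}$ is the ordinary matrix-vector product over $\mathbb{F}$; $\|\mathbf{x}\|_0$ is the number of nonzero entries. $M$ can $\Delta$-approximate $d$ if a deterministic decoder given only $M\mathbf{x}$ outputs $\hat d$ with $\frac1\Delta\le\hat d/d\le\Delta$ for all $\mathbf{x}$ with $\|\mathbf{x}\|_0\le D$. A subspace $V\subseteq\mathbb{F}^n$ is $(\Delta,D)$-distinguishing if any two vectors $\mathbf{x},\mathbf{y}$ in the same coset of $V$ with $\|\mathbf{x}\|_0\le\|\mathbf{y}\|_0\le D$ satisfy $\|\mathbf{y}\|_0\le\Delta^2\|\mathbf{x}\|_0$. *)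

From HB Require Import structures.
From mathcomp Require Import all_boot all_order all_algebra.
From mathcomp Require Import boolp.
From mathcomp Require Import Rstruct.
From Stdlib Require Rdefinitions.
Notation R := Rdefinitions.R.
Set Implicit Arguments. Unset Strict Implicit. Unset Printing Implicit Defensive.
Import Order.TTheory GRing.Theory Num.Theory.
Local Open Scope ring_scope.

Definition sparsity (F : fieldType) (n : nat) (x : 'cV[F]_n) : nat :=
  #|[set i : 'I_n | x i 0 != 0]|.

(* M can Delta-approximate d = ||x||_0 for all x with ||x||_0 <= D:
   a deterministic decoder, seeing only M x, outputs a real d^ with
   1/Delta <= d^/d <= Delta, written multiplicatively
   d/Delta <= d^ <= Delta*d  (so d = 0 forces d^ = 0). *)
Definition can_approx (F : fieldType) (m n : nat) (M : 'M[F]_(m, n))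
    (Delta : R) (D : nat) : Prop :=
  exists dec : 'cV[F]_m -> R,
    forall x : 'cV[F]_n, (sparsity x <= D)%N ->
      (sparsity x)%:R / Delta <= dec (M *m x) /\
      dec (M *m x) <= Delta * (sparsity x)%:R.

(* A subspace V of F^n is represented as the row space of a square matrix
   V : 'M_n (mxalgebra); x (column vector) lies in V iff (x^T <= V)%MS.
   x, y lie in the same coset of V iff x - y lies in V. *)
Definition distinguishing (F : fieldType) (n : nat) (Delta : R) (D : nat)
    (V : 'M[F]_n) : Prop :=
  forall x y : 'cV[F]_n,
    ((x - y)^T <= V)%MS ->
    (sparsity x <= sparsity y)%N -> (sparsity y <= D)%N ->
    (sparsity y)%:R <= Delta ^+ 2 * (sparsity x)%:R.

Definition max_dist_dim (F : fieldType) (n : nat) (Delta : R) (D : nat) : nat :=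
  \max_(k < n.+1 |
        `[< exists V : 'M[F]_n, distinguishing Delta D V /\ \rank V = k >]) k.

Definition theorem7_for (F : fieldType) : Prop :=
  forall (m n : nat) (M : 'M[F]_(m, n)) (Delta : R) (D : nat),
    1 < Delta -> (D <= n)%N ->
    can_approx M Delta D ->
    (n - max_dist_dim F n Delta D <= \rank M)%N.

From HB Require Import structures.
From mathcomp Require Import all_boot all_order all_algebra.
From mathcomp Require Import boolp.
From mathcomp Require Import Rstruct.
From Stdlib Require Rdefinitions.
Set Implicit Arguments. Unset Strict Implicit. Unset Printing Implicit Defensive.
Import Order.TTheory GRing.Theory Num.Theory.
Local Open Scope ring_scope.

(* Vectors in the same coset of ker M have the same sketch M x, so the decoder
   returns one estimate d^ for both: ||y||_0 / Delta <= d^ <= Delta ||x||_0.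
   Hence ker M is (Delta, D)-distinguishing, and its dimension is n - rank M. *)

Lemma mulmx_eq_coset_kermx (F : fieldType) (m n : nat) (M : 'M[F]_(m, n))
    (x y : 'cV[F]_n) :
  ((x - y)^T <= kermx M^T)%MS -> M *m x = M *m y.
Proof.
move/sub_kermxP => Mxy; apply/eqP; rewrite -subr_eq0 -mulmxBr.
by rewrite -[M *m _]trmxK trmx_mul Mxy trmx0.
Qed.

Lemma can_approx_kermx_distinguishing (F : fieldType) (m n : nat)
    (M : 'M[F]_(m, n)) (Delta : R) (D : nat) :
  0 < Delta -> can_approx M Delta D -> distinguishing Delta D (kermx M^T).
Proof.
move=> Delta_gt0 [dec dec_approx] x y /mulmx_eq_coset_kermx Mxy le_xy le_yD.
have [dec_ge _] := dec_approx y le_yD.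
have [_ dec_le] := dec_approx x (leq_trans le_xy le_yD).
rewrite Mxy in dec_le; have := le_trans dec_ge dec_le.
by rewrite ler_pdivrMr // expr2 mulrAC.
Qed.

Lemma rank_distinguishing_le (F : fieldType) (n : nat) (Delta : R) (D : nat)
    (V : 'M[F]_n) :
  distinguishing Delta D V -> (\rank V <= max_dist_dim F n Delta D)%N.
Proof.
move=> distV; have rankV_lt : (\rank V < n.+1)%N by rewrite ltnS rank_leq_col.
apply: (@leq_bigmax_cond _ _ _ (Ordinal rankV_lt)).
by apply/asboolP; exists V.
Qed.

Lemma theorem7_for_field (F : fieldType) : theorem7_for F.
Proof.
move=> m n M Delta D Delta_gt1 _ approx.
have distK := can_approx_kermx_distinguishing (lt_trans ltr01 Delta_gt1) approx.
have := rank_distinguishing_le distK.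
by rewrite mxrank_ker mxrank_tr !leq_subLR addnC.
Qed.

Theorem theorem7 :
  (forall F : finFieldType, theorem7_for F) /\ theorem7_for Rdefinitions.R.
Proof. by split=> [F|]; exact: theorem7_for_field. Qed.
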